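(* For $i\in\{0,1\}$, let $N_i\subseteq W({\rm G}_2)$ be the stabilizer of $\beta_i$ under the action of $W({\rm G}_2)$ on $\Psi^+$, and let $D_i$ be a set of left coset representatives for $N_i$ in $W({\rm G}_2)$. Let $K_0=\{1\}\subseteq N_0$ and let $K_1\subseteq N_1$ be the subgroup generated by $r_0r_1r_0r_1r_0$. Then for every $r\in W({\rm G}_2)$ and $i\in\{0,1\}$ there exist $a\in D_i$ and $b\in K_i$ such that $re_i=ae_ib$ in ${\rm Br}({\rm G}_2)$.
   Context: Let $\delta$ be an indeterminate. ${\rm Br}({\rm G}_2)$ is the $\mathbb{Z}[\delta^{\pm1}]$-algebra generated by $r_0,r_1,e_0,e_1$ subject to the following relations: - $r_0^2=r_1^2=1$; - $r_ie_i=e_ir_i=e_i$ for $i=0,1$; - $e_0^2=\delta^3e_0$ and $e_1^2=\delta e_1$; - $r_0e_1e_0=r_1e_0$ and $e_0e_1r_0=e_0r_1$; - $e_1r_0e_1r_0e_1=e_1$ and $e_1r_0e_1r_0r_1=e_1r_0r_1r_0$; - $e_0r_1e_0=\delta^2e_0$; - $r_1r_0e_1r_0e_1=r_0r_1r_0e_1$; - $(r_1r_0)^6=1$. Let $\Psi$ be a root system of type ${\rm G}_2$ with simple roots $\beta_0$ (short) and $\beta_1$ (long), and positive roots $\Psi^+$. $W({\rm G}_2)$ is generated by the reflections $s_0,s_1$ in $\beta_0,\beta_1$. It acts on $\Psi^+$ by $w\cdot\beta=$ the unique element of $\Psi^+\cap\{\pm w\beta\}$. The subgroup of units of ${\rm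 Br}({\rm G}_2)$ generated by $r_0,r_1$ is isomorphic to $W({\rm G}_2)$ via $r_i\mapsto s_i$. Elements of $W({\rm G}_2)$ are identified with their images in ${\rm Br}({\rm G}_2)$. *)

From HB Require Import structures.
From mathcomp Require Import all_boot all_order all_algebra all_fingroup.
Set Implicit Arguments. Unset Strict Implicit. Unset Printing Implicit Defensive.
Import GRing.Theory.

(* The root system Psi of type G2.  A root x*beta0 + y*beta1 is coded   *)
(* by its coordinates (x, y) in the basis of simple roots; beta0 is the *)
(* short simple root, beta1 the long one.                               *)
Definition vec := (int * int)%type.

Local Open Scope ring_scope.

Definition G2pos : seq vec :=
  [:: (1, 0); (0, 1); (1, 1); (2, 1); (3, 1); (3, 2)].
Definition vneg (v : vec) : vec := (- v.1, - v.2).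
Definition G2roots : seq vec := G2pos ++ map vneg G2pos.

(* Simple reflections (Cartan integers <beta1,beta0^v> = -3,
   <beta0,beta1^v> = -1):  s0 b0 = -b0, s0 b1 = b1 + 3 b0;
   s1 b1 = -b1, s1 b0 = b0 + b1. *)
Definition s0v (v : vec) : vec := (- v.1 + 3 * v.2, v.2).
Definition s1v (v : vec) : vec := (v.1, v.1 - v.2).

Lemma s0v_invol v : s0v (s0v v) = v.
Proof. by case: v => x y; rewrite /s0v /=; congr pair; rewrite opprD opprK subrK. Qed.
Lemma s1v_invol v : s1v (s1v v) = v.
Proof. by case: v => x y; rewrite /s1v /=; congr pair; rewrite opprB addrC subrK. Qed.

Definition G2root := seq_sub G2roots.

Lemma s0v_closed : all (fun v => s0v v \in G2roots) G2roots. Proof. by []. Qed.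
Lemma s1v_closed : all (fun v => s1v v \in G2roots) G2roots. Proof. by []. Qed.
Lemma vneg_closed : all (fun v => vneg v \in G2roots) G2roots. Proof. by []. Qed.

Definition s0r (x : G2root) : G2root :=
  SeqSub (allP s0v_closed _ (ssvalP x)).
Definition s1r (x : G2root) : G2root :=
  SeqSub (allP s1v_closed _ (ssvalP x)).
Definition negr (x : G2root) : G2root :=
  SeqSub (allP vneg_closed _ (ssvalP x)).

Lemma s0rK : involutive s0r.
Proof. by move=> x; apply: val_inj; rewrite /= s0v_invol. Qed.
Lemma s1rK : involutive s1r.
Proof. by move=> x; apply: val_inj; rewrite /= s1v_invol. Qed.

Definition s0 : {perm G2root} := perm (can_inj s0rK).
Definition s1 : {perm G2root} := perm (can_inj s1rK).

(* CONVENTION: MathComp's product of permutations is (p * q) x = q (p x),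
   i.e. p * q is the composite "q after p".  The underlying set of the
   generated group is the same as for composition. *)
Definition WG2 : {group {perm G2root}} := <<[set s0; s1]>>%G.

Lemma beta0_in : ((1, 0) : vec) \in G2roots. Proof. by []. Qed.
Lemma beta1_in : ((0, 1) : vec) \in G2roots. Proof. by []. Qed.
Definition beta0 : G2root := SeqSub beta0_in.
Definition beta1 : G2root := SeqSub beta1_in.
(* index i : bool, false = 0, true = 1 *)
Definition beta (i : bool) : G2root := if i then beta1 else beta0.

Definition pact (w : {perm G2root}) (b : G2root) : G2root :=
  if ssval (w b) \in G2pos then w b else negr (w b).

Definition Nstab (i : bool) : {set {perm G2root}} :=
  [set w in WG2 | pact w (beta i) == beta i].

(* With MathComp's product convention, the set
   { a o n | n in N } is  N :* a = [set n * a | n in N], so the left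
   cosets (for composition) are the elements of  rcosets N WG2. *)
Definition left_coset_reps (D N : {set {perm G2root}}) : bool :=
  is_transversal D (rcosets N WG2) WG2.

(* Words in the generators: false = r0 (resp. s0), true = r1 (resp. s1).
   wordW w is the composite map  g(x1) o g(x2) o ... o g(xn)
   for w = [:: x1; ...; xn]. *)
Definition gen (x : bool) : {perm G2root} := if x then s1 else s0.
Fixpoint wordW (w : seq bool) : {perm G2root} :=
  if w is x :: w' then (wordW w' * gen x)%g else 1%g.

Definition Kgrp (i : bool) : {set {perm G2root}} :=
  if i then <[wordW [:: false; true; false; true; false]]>%g else [1 {perm G2root}]%g.

(* The algebra Br(G2).  A Z[delta^{+-1}]-algebra is a (unital,         *)
(* associative) ring A together with a central unit (the image of       *)
(* delta).  A "model" of Br(G2) in A is such a central unit together    *)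
(* with elements r0 r1 e0 e1 of A satisfying the defining relations.     *)
(* Br(G2) is the universal model, so an identity between words holds    *)
(* in Br(G2) iff it holds in every model.                               *)
Record BrG2model (A : pzRingType) := BrG2Model {
  dl : A; dlinv : A; r0 : A; r1 : A; e0 : A; e1 : A;
  dl_unitl : dl * dlinv = 1;
  dl_unitr : dlinv * dl = 1;
  dl_central : forall x : A, dl * x = x * dl;
  rel_r0r0 : r0 * r0 = 1;
  rel_r1r1 : r1 * r1 = 1;
  rel_r0e0 : r0 * e0 = e0;
  rel_e0r0 : e0 * r0 = e0;
  rel_r1e1 : r1 * e1 = e1;
  rel_e1r1 : e1 * r1 = e1;
  rel_e0e0 : e0 * e0 = dl ^+ 3 * e0;
  rel_e1e1 : e1 * e1 = dl * e1;
  rel_r0e1e0 : r0 * e1 * e0 = r1 * e0;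
  rel_e0e1r0 : e0 * e1 * r0 = e0 * r1;
  rel_e1r0e1r0e1 : e1 * r0 * e1 * r0 * e1 = e1;
  rel_e1r0e1r0r1 : e1 * r0 * e1 * r0 * r1 = e1 * r0 * r1 * r0;
  rel_e0r1e0 : e0 * r1 * e0 = dl ^+ 2 * e0;
  rel_r1r0e1r0e1 : r1 * r0 * e1 * r0 * e1 = r0 * r1 * r0 * e1;
  rel_braid : (r1 * r0) ^+ 6 = 1
}.

Definition egen (A : pzRingType) (M : BrG2model A) (i : bool) : A :=
  if i then e1 M else e0 M.
Definition rgen (A : pzRingType) (M : BrG2model A) (x : bool) : A :=
  if x then r1 M else r0 M.
Definition evalw (A : pzRingType) (M : BrG2model A) (w : seq bool) : A :=
  foldr (fun x acc => rgen M x * acc) 1 w.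

(* W(G2) is dihedral of order 12: every word in r0, r1 reduces, in W as well
   as in every model of Br(G2), to a normal form (r0 r1)^k r0^f, and distinct
   normal forms give distinct elements of W.  So the image of a word in Br(G2)
   depends only on the element of W it represents.  The transversal D_i meets
   the coset of r in an element a = r n with n in N_i, hence
   r e_i = r (n e_i b) = a e_i b as soon as n e_i b = e_i for some b in K_i.
   This absorption is checked on the four elements of each N_i: r_i e_i = e_i,
   r1 r0 r1 r0 r1 e0 = e0 follows from r0 e1 e0 = r1 e0, and the reflection
   t = r0 r1 r0 r1 r0 satisfies t e1 t = e1, which is why K_1 = <t> is needed. *)

From mathcomp Require Import all_boot all_order all_algebra all_fingroup.
Import GRing.Theory.
Local Open Scope ring_scope.

(* With c = r0 r1 of order 6, r_x = r0 c^x and r0 c = c^5 r0, so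
   r_x c^k r0^f = c^(5 (x + k)) r0^(1 + f). *)
Definition dnf_cons (x : bool) (s : nat * bool) : nat * bool :=
  ((5 * (x + s.1)) %% 6, ~~ s.2)%N.

Definition dnf (w : seq bool) : nat * bool := foldr dnf_cons (0, false)%N w.

Definition rot_word (k : nat) : seq bool := flatten (nseq k [:: false; true]).

Definition nf_word (s : nat * bool) : seq bool := rot_word s.1 ++ nseq s.2 false.

Definition dnf_range : seq (nat * bool) :=
  [seq (k, f) | k <- iota 0 6, f <- [:: false; true]].

Lemma dnf_in_range w : dnf w \in dnf_range.
Proof.
case: w => [|x w] //=; rewrite /dnf_cons.
by case: (_ %% 6)%N (ltn_pmod (5 * (x + (dnf w).1)) (isT : (0 < 6)%N))
  => [|[|[|[|[|[|]]]]]] //; case: (~~ _).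
Qed.

Section DihedralNormalForm.

Context {A : pzRingType} (M : BrG2model A).
Local Notation r0 := (r0 M).
Local Notation r1 := (r1 M).
Local Notation c := (r0 * r1).

Lemma evalw_cat u v : evalw M (u ++ v) = evalw M u * evalw M v.
Proof. by elim: u => [|x u IH]; rewrite /= ?mul1r // IH mulrA. Qed.

Lemma r0K x : r0 * (r0 * x) = x.
Proof. by rewrite mulrA rel_r0r0 mul1r. Qed.

Lemma r1K x : r1 * (r1 * x) = x.
Proof. by rewrite mulrA rel_r1r1 mul1r. Qed.

Lemma evalw_nf_word s : evalw M (nf_word s) = c ^+ s.1 * r0 ^+ s.2.
Proof.
case: s => k f; rewrite evalw_cat; congr (_ * _).
  elim: k => // k IH.
  by rewrite -[rot_word _]/([:: false; true] ++ rot_word k) evalw_cat IH exprS /= mulr1.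
by case: f; rewrite /= ?mulr1.
Qed.

Lemma r0_rotX k : r0 * c ^+ k = (r1 * r0) ^+ k * r0.
Proof.
elim: k => [|k IH]; first by rewrite !expr0 mulr1 mul1r.
by rewrite exprSr mulrA IH -!mulrA r0K exprSr -!mulrA rel_r0r0 mulr1.
Qed.

Lemma rot_order : c ^+ 6 = 1.
Proof. by rewrite -[LHS]r0K r0_rotX rel_braid mul1r rel_r0r0. Qed.

Lemma r0_rot_swap k : r0 * c ^+ k = c ^+ (5 * k) * r0.
Proof.
have rotV : r1 * r0 = c ^+ 5.
  by rewrite -[LHS]mul1r -rot_order exprSr -mulrA -(mulrA r0) r1K rel_r0r0 mulr1.
by rewrite r0_rotX rotV exprM.
Qed.

Lemma rot_mod k : c ^+ k = c ^+ (k %% 6).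
Proof. by rewrite {1}(divn_eq k 6) exprD mulnC exprM rot_order expr1n mul1r. Qed.

Lemma evalw_dnf w : evalw M w = c ^+ (dnf w).1 * r0 ^+ (dnf w).2.
Proof.
elim: w => [|x w IH] /=; first by rewrite !mulr1.
have rgenE : rgen M x = r0 * c ^+ x.
  by case: x; rewrite /= ?mulr1 // r0K.
rewrite IH rgenE -mulrA (mulrA (c ^+ x)) -exprD mulrA r0_rot_swap -rot_mod -mulrA.
by congr (_ * _); case: (dnf w).2; rewrite /= ?mulr1 ?rel_r0r0.
Qed.

Lemma evalw_dnf_eq u v : dnf u = dnf v -> evalw M u = evalw M v.
Proof. by move=> E; rewrite !evalw_dnf E. Qed.

End DihedralNormalForm.

Definition gen_vec (x : bool) : vec -> vec := if x then s1v else s0v.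

Definition word_vec (w : seq bool) (v : vec) : vec := foldr gen_vec v w.

Lemma wordW_val w y : ssval (wordW w y) = word_vec w (ssval y).
Proof.
elim: w => [|x w IH] /=; first by rewrite perm1.
by rewrite permM; case: x; rewrite permE /= IH.
Qed.

Lemma wordW_eq u v :
  all (fun z => word_vec u z == word_vec v z) G2roots -> wordW u = wordW v.
Proof.
move=> /allP uv; apply/permP => y; apply: val_inj.
by rewrite /= !wordW_val; apply/eqP/uv/ssvalP.
Qed.

Lemma wordW_cat u v : wordW (u ++ v) = (wordW v * wordW u)%g.
Proof. by elim: u => [|x u IH]; rewrite /= ?mulg1 // IH mulgA. Qed.

Lemma wordW_in_W w : wordW w \in WG2.
Proof.
elim: w => [|x w IH]; first exact: group1.
by rewrite groupM // mem_gen //; case: x; rewrite !inE eqxx ?orbT.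
Qed.

Lemma WG2_wordW g : g \in WG2 -> exists w, wordW w = g.
Proof.
case/gen_prodgP => n [h hP ->]; elim: n h hP => [|n IH] h hP.
  by exists [::]; rewrite big_ord0.
rewrite big_ord_recr; have [w <-] := IH _ (fun j => hP (widen_ord (leqnSn n) j)).
have := hP ord_max; rewrite !inE => /orP[] /eqP ->.
- by exists (false :: w).
- by exists (true :: w).
Qed.

(* Identities in W are decided on coordinate vectors (via wordW_val and
   wordW_eq): evaluating the permutations themselves is far too slow. *)
Lemma dnf_cons_wordW_check :
  all (fun s => all (fun x => all (fun z =>
      word_vec (x :: nf_word s) z == word_vec (nf_word (dnf_cons x s)) z)
    G2roots) [:: false; true]) dnf_range.
Proof. by vm_compute. Qed.

Lemma wordW_dnf w : wordW w = wordW (nf_word (dnf w)).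
Proof.
elim: w => [|x w IH] //.
have /allP/(_ x) := allP dnf_cons_wordW_check _ (dnf_in_range w).
by rewrite [LHS]/= IH !inE; case: x => /(_ isT)/wordW_eq.
Qed.

Lemma nf_word_simple_roots_check :
  all (fun s => all (fun t =>
      (word_vec (nf_word s) (1, 0) == word_vec (nf_word t) (1, 0)) &&
      (word_vec (nf_word s) (0, 1) == word_vec (nf_word t) (0, 1)) ==> (s == t))
    dnf_range) dnf_range.
Proof. by vm_compute. Qed.

Lemma dnf_wordW u v : wordW u = wordW v -> dnf u = dnf v.
Proof.
rewrite (wordW_dnf u) (wordW_dnf v) => E.
have /allP/(_ _ (dnf_in_range v)) := allP nf_word_simple_roots_check _ (dnf_in_range u).
by rewrite -(wordW_val _ beta0) -(wordW_val _ beta1) E !wordW_val !eqxx => /eqP.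
Qed.

Lemma evalw_wordW (A : pzRingType) (M : BrG2model A) u v :
  wordW u = wordW v -> evalw M u = evalw M v.
Proof. by move/dnf_wordW/evalw_dnf_eq. Qed.

Definition pact_vec (w : seq bool) (v : vec) : vec :=
  let u := word_vec w v in if u \in G2pos then u else vneg u.

Lemma pact_wordW w b : ssval (pact (wordW w) b) = pact_vec w (ssval b).
Proof. by rewrite /pact /pact_vec -wordW_val; case: ifP. Qed.

Definition refl0_word : seq bool := [:: true; false; true; false; true].
Definition refl1_word : seq bool := [:: false; true; false; true; false].

(* The four elements of N_i, each paired with the b in K_i that absorbs it. *)
Definition stab_reps (i : bool) : seq (seq bool * seq bool) :=
  if i then [:: ([::], [::]); ([:: true], [::]);
                (refl1_word, refl1_word); (true :: refl1_word, refl1_word)]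
  else [:: ([::], [::]); ([:: false], [::]);
           (refl0_word, [::]); (rcons refl0_word false, [::])].

Lemma stab_reps_check :
  all (fun s => all (fun i =>
      (pact_vec (nf_word s) (ssval (beta i)) == ssval (beta i)) ==>
      has (fun mb => dnf mb.1 == s) (stab_reps i))
    [:: false; true]) dnf_range.
Proof. by vm_compute. Qed.

Lemma Nstab_stab_reps w i :
  wordW w \in Nstab i -> exists2 mb, mb \in stab_reps i & dnf mb.1 = dnf w.
Proof.
rewrite inE => /andP[_ /eqP/(congr1 (@ssval _ G2roots))].
rewrite wordW_dnf pact_wordW => fix_beta.
have /allP/(_ i) := allP stab_reps_check _ (dnf_in_range w).
rewrite fix_beta eqxx; case: i {fix_beta} => /(_ isT)/hasP[mb mbP /eqP];
  by exists mb.
Qed.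

Lemma stab_reps_Kgrp i mb : mb \in stab_reps i -> wordW mb.2 \in Kgrp i.
Proof.
by case: i; rewrite !inE => /or4P[] /eqP-> /=; rewrite ?group1 ?cycle_id.
Qed.

Section StabilizerAbsorption.

Context {A : pzRingType} (M : BrG2model A).
Local Notation r0 := (r0 M).
Local Notation r1 := (r1 M).
Local Notation e0 := (e0 M).
Local Notation e1 := (e1 M).

Lemma refl0_e0 : evalw M refl0_word * e0 = e0.
Proof.
have r1e0 : r1 * e0 = r0 * (e1 * e0) by rewrite mulrA rel_r0e1e0.
by rewrite /= mulr1 -!mulrA r1e0 r0K (mulrA r1 e1) rel_r1e1 -r1e0 r1K.
Qed.

Lemma refl1_e1_refl1 : evalw M refl1_word * e1 * evalw M refl1_word = e1.
Proof.
have braid_e1 x : r0 * (r1 * (r0 * (e1 * x))) = r1 * (r0 * (e1 * (r0 * (e1 * x)))).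
  by rewrite !mulrA rel_r1r0e1r0e1.
have e1_braid x : e1 * (r0 * (e1 * (r0 * (r1 * x)))) = e1 * (r0 * (r1 * (r0 * x))).
  by rewrite !mulrA rel_e1r0e1r0r1.
rewrite /= !mulr1 -!mulrA braid_e1 r1K r0K e1_braid r0K r1K.
by rewrite rel_r0r0 mulr1.
Qed.

Lemma stab_reps_absorb i mb :
  mb \in stab_reps i -> evalw M mb.1 * egen M i * evalw M mb.2 = egen M i.
Proof.
case: i; rewrite !inE => /or4P[] /eqP->.
- by rewrite /= mulr1 mul1r.
- by rewrite /= !mulr1 rel_r1e1.
- exact: refl1_e1_refl1.
- transitivity (r1 * (evalw M refl1_word * e1 * evalw M refl1_word)).
    by rewrite /= !mulr1 !mulrA.
  by rewrite refl1_e1_refl1 rel_r1e1.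
- by rewrite /= mulr1 mul1r.
- by rewrite /= !mulr1 rel_r0e0.
- by rewrite mulr1; exact: refl0_e0.
- transitivity (evalw M refl0_word * (r0 * e0)).
    by rewrite /= !mulr1 !mulrA.
  by rewrite rel_r0e0 refl0_e0.
Qed.

End StabilizerAbsorption.

Lemma Nstab_absorb w i :
  wordW w \in Nstab i ->
  exists b, wordW b \in Kgrp i /\
    forall (A : pzRingType) (M : BrG2model A),
      evalw M w * egen M i * evalw M b = egen M i.
Proof.
case/Nstab_stab_reps => mb mbP dnf_mb; exists mb.2; split.
  exact: stab_reps_Kgrp mbP.
by move=> A M; rewrite -(evalw_dnf_eq M _ _ dnf_mb); exact: stab_reps_absorb.
Qed.

Lemma transversal_rcoset {gT : finGroupType} {G : {group gT}} {N D : {set gT}} {x : gT} :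
  is_transversal D (rcosets N G) G -> x \in G -> exists2 n, n \in N & (n * x)%g \in D.
Proof.
move=> trD Gx; have NxG : (N :* x)%g \in rcosets N G by apply/rcosetsP; exists x.
have /rcosetP[n Nn nxE] := repr_mem_pblock trD 1%g NxG.
by exists n => //; rewrite -nxE; exact: repr_mem_transversal trD _ _ NxG.
Qed.

Theorem lemma9p5 :
  forall D : bool -> {set {perm G2root}},
  (forall i : bool, left_coset_reps (D i) (Nstab i)) ->
  forall (r : seq bool) (i : bool),
  exists a b : seq bool,
    [/\ wordW a \in D i, wordW b \in Kgrp i &
      forall (A : pzRingType) (M : BrG2model A),
        evalw M r * egen M i = evalw M a * egen M i * evalw M b].
Proof.
move=> D trD r i.
have [n Nn Dnr] := transversal_rcoset (trD i) (wordW_in_W r).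
have [w wn] : exists w, wordW w = n.
  by apply: WG2_wordW; move: Nn; rewrite inE => /andP[].
have [a an] := WG2_wordW _ (subsetP (transversal_sub (trD i)) _ Dnr).
rewrite -wn in Nn; have [b [Kb absorb]] := Nstab_absorb w i Nn.
exists a, b; split=> //; first by rewrite an.
move=> A M; have -> : evalw M a = evalw M r * evalw M w.
  by rewrite -evalw_cat; apply: evalw_wordW; rewrite wordW_cat an wn.
by rewrite -[in LHS]absorb !mulrA.
Qed.
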